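(* Let $\mathcal X\subset\mathbb R^p$ be a finite set (with Euclidean distance $d$) having a convex-nice clustering $\mathcal C=\{C_1,\ldots,C_k\}$, and let $\beta=\min_i|C_i|/|\mathcal X|$. Let $\ell$ be an integer with $k\le\ell\le|\mathcal X|$. If the points of $\mathcal X$ are presented in a uniformly random order, then with probability at least $1-ke^{-\beta\ell}$, the final centers of sequential $\ell$-means induce a clustering of $\mathcal X$ that is a refinement of $\mathcal C$.
   Context: A clustering of $\mathcal X$ is a set of nonempty, pairwise disjoint subsets whose union is $\mathcal X$. A clustering $\mathcal C=\{C_1,\ldots,C_k\}$ is convex-nice if for any $i\ne j$, any points $x,y$ in the convex hull of $C_i$ and any point $z$ in the convex hull of $C_j$, $d(y,x)<d(z,x)$. A list $T=(t_1,\ldots,t_m)$ induces the clustering of $\mathcal X$ assigning each $x$ to the index $i$ minimizing $\|x-t_i\|$ (ties broken by smallest $i$), empty clusters discarded. $\mathcal C$ is a refinement of $\mathcal C'$ if $x\sim_{\mathcal C}y$ implies $x\sim_{\mathcal C'}y$, where $x\sim_{\mathcal C}y$ means $x,y$ lie in the same cluster of $\mathcal C$. Sequential $\ell$-means on input sequence $x_1,\ldots,x_N$: set $t_i=x_i$ and $n_i=1$ for $i=1,\ldots,\ell$; then for each subsequent point $x$: let $i$ be the index of the closest center to $x$ (ties by smallest index), increment $n_i$, and replace $t_i$ by $t_i+(1/n_i)(x-t_i)$. Output the final $(t_1,\ldots,t_\ell)$. *)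

From mathcomp Require Import all_boot all_fingroup.
From Stdlib Require Import Reals.
Set Implicit Arguments. Unset Strict Implicit. Unset Printing Implicit Defensive.

Local Open Scope R_scope.

Definition pt (p : nat) := 'I_p -> R.

Definition dist (p : nat) (x y : pt p) : R :=
  sqrt (\big[Rplus/0%R]_(i < p) ((x i - y i) * (x i - y i))).

(* Index of the closest center to x in the list ts (ties: smallest index). *)
Fixpoint nearest_aux (p : nat) (x : pt p) (ts : seq (pt p)) (j bi : nat) (bd : R)
  : nat :=
  match ts with
  | [::] => bi
  | t :: ts' =>
      if Rlt_dec (dist x t) bd then nearest_aux x ts' j.+1 j (dist x t)
      else nearest_aux x ts' j.+1 bi bd
  end.

Definition nearest (p : nat) (ts : seq (pt p)) (x : pt p) : nat :=
  match ts with
  | [::] => 0%nat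
  | t :: ts' => nearest_aux x ts' 1 0 (dist x t)
  end.

(* One step of sequential l-means: state = (centers, counts). *)
Definition smeans_step (p : nat) (st : seq (pt p) * seq nat) (x : pt p)
  : seq (pt p) * seq nat :=
  let: (ts, ns) := st in
  let i := nearest ts x in
  let n' := (nth 0%nat ns i).+1 in
  let ti := nth (fun _ => 0%R) ts i in
  (set_nth (fun _ => 0%R) ts i (fun a => ti a + (/ INR n') * (x a - ti a)),
   set_nth 0%nat ns i n').

Definition seq_means (p l : nat) (pts : seq (pt p)) : seq (pt p) :=
  (foldl (@smeans_step p) (take l pts, nseq l 1%nat) (drop l pts)).1.

(* Convex hull of the cluster with label i, for points x : 'I_N -> pt p and
   labelling c : 'I_N -> 'I_k. *)
Definition in_hull (p N k : nat) (x : 'I_N -> pt p) (c : 'I_N -> 'I_k)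
  (i : 'I_k) (y : pt p) : Prop :=
  exists w : 'I_N -> R,
    (forall j, 0 <= w j) /\ (forall j, c j != i -> w j = 0) /\
    \big[Rplus/0%R]_(j < N) w j = 1 /\
    forall a, y a = \big[Rplus/0%R]_(j < N) (w j * x j a).

Definition convex_nice (p N k : nat) (x : 'I_N -> pt p) (c : 'I_N -> 'I_k) : Prop :=
  forall i j : 'I_k, i <> j ->
  forall a b z : pt p, in_hull x c i a -> in_hull x c i b -> in_hull x c j z ->
    dist b a < dist z a.

Definition cluster_size (N k : nat) (c : 'I_N -> 'I_k) (i : 'I_k) : nat :=
  #|[set j | c j == i]|.

Definition ordered_input (p N : nat) (x : 'I_N -> pt p) (s : {perm 'I_N})
  : seq (pt p) := [seq x (s j) | j <- enum 'I_N].

Definition induced_refines (p N k : nat) (x : 'I_N -> pt p) (c : 'I_N -> 'I_k)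
  (T : seq (pt p)) : bool :=
  [forall a, forall b, (nearest T (x a) == nearest T (x b)) ==> (c a == c b)].

Definition good_order (p N k l : nat) (x : 'I_N -> pt p) (c : 'I_N -> 'I_k)
  (s : {perm 'I_N}) : bool :=
  induced_refines x c (seq_means l (ordered_input x s)).

(* Convex-niceness makes the following an invariant of sequential l-means:
   every center lies in the convex hull of some cluster, and the hull of every
   cluster contains a center.  Indeed, the center nearest to a point of C_i then
   lies in hull(C_i), since a center in another hull is farther from that point
   than the center in hull(C_i); the update moves it along a segment inside
   hull(C_i), and the induced clustering refines C.  The invariant holds after
   initialization as soon as every cluster is hit by the first l points.  The
   number A_t of orders missing C_i in the first t positions satisfies
   (N - t) A_(t+1) = (N - t - |C_i|) A_t, so A_l <= N! (1 - |C_i|/N)^l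
   <= N! exp (- beta l), and a union bound over the k clusters concludes. *)

From HB Require Import structures.
From Pilot Require Import Defs.
From mathcomp Require Import all_boot all_fingroup.
From Stdlib Require Import Reals Lra Lia.
From mathcomp Require Import zify.

Set Implicit Arguments.
Unset Strict Implicit.
Unset Printing Implicit Defensive.

HB.instance Definition _ := Monoid.isComLaw.Build R 0%R Rplus
  (fun a b c => esym (Rplus_assoc a b c)) Rplus_comm Rplus_0_l.

Local Open Scope R_scope.

Definition origin {p : nat} : pt p := fun _ => 0.

Lemma mulR_sumr (I : Type) (r : seq I) (a : R) (F : I -> R) :
  a * \big[Rplus/0]_(j <- r) F j = \big[Rplus/0]_(j <- r) (a * F j).
Proof. by elim/big_rec2: _ => [|j s t _ <-]; ring. Qed.

Lemma dist_sym p (a b : pt p) : Defs.dist a b = Defs.dist b a.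
Proof. by rewrite /Defs.dist; congr sqrt; apply: eq_bigr => i _; ring. Qed.

Section Nearest.
Variables (p : nat) (y : pt p).

Definition nearest_index (s : seq (pt p)) (i : nat) : Prop :=
  (i < size s)%nat /\
  forall m, (m < size s)%nat -> Defs.dist y (nth origin s i) <= Defs.dist y (nth origin s m).

Lemma nearest_index_aux ts pre bi : nearest_index pre bi ->
  nearest_index (pre ++ ts)
    (nearest_aux y ts (size pre) bi (Defs.dist y (nth origin pre bi))).
Proof.
elim: ts pre bi => [|t ts IH] pre bi [bi_lt bi_min] /=; first by rewrite cats0.
rewrite -cat_rcons.
have nth_pre m : (m < size pre)%nat -> nth origin (rcons pre t) m = nth origin pre m.
  by move=> m_lt; rewrite nth_rcons m_lt.
have nth_t : nth origin (rcons pre t) (size pre) = t by rewrite nth_rcons ltnn eqxx.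
case: Rlt_dec => t_lt.
- have := IH (rcons pre t) (size pre); rewrite size_rcons nth_t; apply.
  split=> [|m]; rewrite size_rcons // nth_t ltnS leq_eqVlt.
  case/orP=> [/eqP -> | m_lt]; rewrite ?nth_t; first lra.
  by rewrite nth_pre //; have := bi_min m m_lt; lra.
- have := IH (rcons pre t) bi; rewrite size_rcons nth_pre //; apply.
  split=> [|m]; rewrite size_rcons; first lia.
  rewrite nth_pre // ltnS leq_eqVlt; case/orP=> [/eqP -> | m_lt].
    by rewrite nth_t; lra.
  by rewrite nth_pre //; exact: bi_min.
Qed.

Lemma nearest_index_nearest ts : (0 < size ts)%nat -> nearest_index ts (nearest ts y).
Proof.
case: ts => [//|t ts] _; apply: (@nearest_index_aux ts [:: t] 0).
by split=> // m; rewrite ltnS leqn0 => /eqP ->; lra.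
Qed.

End Nearest.

Section ConvexNice.
Variables (p N k : nat) (x : 'I_N -> pt p) (c : 'I_N -> 'I_k).

Lemma in_hull_point q : in_hull x c (c q) (x q).
Proof.
exists (fun j => if j == q then 1 else 0); split; [|split; [|split]].
- by move=> j; case: (j == q); lra.
- by move=> j; case: (eqVneq j q) => [->|]; rewrite ?eqxx.
- by rewrite -big_mkcond big_pred1_eq.
- move=> a; rewrite (eq_bigr (fun j => if j == q then x q a else 0)).
    by rewrite -big_mkcond big_pred1_eq.
  by move=> j _; case: (eqVneq j q) => [->|_]; ring.
Qed.

Lemma in_hull_segment i (t y : pt p) (lam : R) :
  in_hull x c i t -> in_hull x c i y -> 0 <= lam <= 1 ->
  in_hull x c i (fun a => t a + lam * (y a - t a)).
Proof.
move=> [w1 [w1_ge0 [w1_out [w1_sum t_eq]]]] [w2 [w2_ge0 [w2_out [w2_sum y_eq]]]] lam01.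
exists (fun j => (1 - lam) * w1 j + lam * w2 j); split; [|split; [|split]].
- by move=> j; have := w1_ge0 j; have := w2_ge0 j; nra.
- by move=> j cj; rewrite (w1_out j cj) (w2_out j cj); ring.
- by rewrite big_split /= -!mulR_sumr w1_sum w2_sum; ring.
- move=> a; rewrite t_eq y_eq.
  rewrite [RHS](eq_bigr (fun j => (1 - lam) * (w1 j * x j a) + lam * (w2 j * x j a)));
    last by move=> j _; ring.
  by rewrite big_split /= -!mulR_sumr; ring.
Qed.

Hypothesis Hnice : convex_nice x c.

Lemma in_hull_inj i j y : in_hull x c i y -> in_hull x c j y -> i = j.
Proof.
move=> hi hj; case: (eqVneq i j) => // /eqP ij.
by have := Hnice ij hi hi hj; lra.
Qed.

Definition centers_in_hulls (ts : seq (pt p)) : Prop :=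
  (forall n, (n < size ts)%nat -> exists i, in_hull x c i (nth origin ts n)) /\
  (forall i, exists2 n, (n < size ts)%nat & in_hull x c i (nth origin ts n)).

Lemma nearest_in_hull ts q : centers_in_hulls ts ->
  let n := nearest ts (x q) in
  (n < size ts)%nat /\ in_hull x c (c q) (nth origin ts n).
Proof.
move=> [ts_in ts_cover] /=; have [m m_lt m_in] := ts_cover (c q).
have [n_lt n_min] := nearest_index_nearest (x q) (leq_ltn_trans (leq0n m) m_lt).
split=> //; have [i n_in] := ts_in _ n_lt.
case: (eqVneq i (c q)) => [<- // | /eqP i_cq].
have := Hnice (nesym i_cq) (in_hull_point q) m_in n_in.
by have := n_min m m_lt; rewrite !(dist_sym (x q)); lra.
Qed.

Lemma centers_in_hulls_set_nth ts n v i : centers_in_hulls ts -> (n < size ts)%nat ->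
  in_hull x c i (nth origin ts n) -> in_hull x c i v ->
  centers_in_hulls (set_nth origin ts n v).
Proof.
move=> [ts_in ts_cover] n_lt n_in v_in.
have size_ts : size (set_nth origin ts n v) = size ts by rewrite size_set_nth; lia.
split=> [m | j]; rewrite size_ts.
- by move=> m_lt; rewrite nth_set_nth /=; case: eqP => _; [exists i | exact: ts_in].
- have [m m_lt m_in] := ts_cover j; exists m; rewrite // nth_set_nth /=.
  by case: eqP => [mn | //]; rewrite mn in m_in; rewrite (in_hull_inj m_in n_in).
Qed.

Lemma centers_in_hulls_step st q : centers_in_hulls st.1 ->
  centers_in_hulls (smeans_step st (x q)).1.
Proof.
case: st => ts ns inv; have [n_lt n_in] := nearest_in_hull q inv.
apply: (centers_in_hulls_set_nth inv n_lt n_in).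
apply: in_hull_segment => //; first exact: in_hull_point.
have := pos_INR (nth 0%nat ns (nearest ts (x q))); rewrite S_INR => cnt_ge0.
split; first by apply/Rlt_le/Rinv_0_lt_compat; lra.
by rewrite -Rinv_1; apply: Rinv_le_contravar; lra.
Qed.

Lemma centers_in_hulls_foldl qs st : centers_in_hulls st.1 ->
  centers_in_hulls (foldl (@smeans_step p) st (map x qs)).1.
Proof. by elim: qs st => //= q qs IH st inv; apply/IH/centers_in_hulls_step. Qed.

Lemma centers_in_hulls_refines ts : centers_in_hulls ts -> induced_refines x c ts.
Proof.
move=> inv; apply/forallP => a; apply/forallP => b; apply/implyP => /eqP nab.
have [_ a_in] := nearest_in_hull a inv; have [_ b_in] := nearest_in_hull b inv.
by rewrite nab in a_in; rewrite (in_hull_inj a_in b_in).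
Qed.

Lemma good_order_of_prefix_hits l (s : {perm 'I_N}) : (l <= N)%nat ->
  (forall i, exists2 j : 'I_N, (j < l)%nat & c (s j) = i) -> good_order l x c s.
Proof.
move=> l_le_N hits; apply: centers_in_hulls_refines.
have input_eq : ordered_input x s = map x (map s (enum 'I_N)) by rewrite -map_comp.
rewrite /seq_means input_eq -map_drop; apply: centers_in_hulls_foldl => /=.
have size_pre : size (take l (map s (enum 'I_N))) = l.
  by rewrite size_takel // size_map size_enum_ord.
rewrite -map_take; split; rewrite size_map size_pre.
- move=> n n_lt; have n_lt_N : (n < N)%nat by lia.
  by rewrite (nth_map (Ordinal n_lt_N)) ?size_pre //; eexists; apply: in_hull_point.
- move=> i; have [j j_lt <-] := hits i; exists (nat_of_ord j) => //.
  rewrite (nth_map j) ?size_pre // nth_take // (nth_map j) ?size_enum_ord //.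
  by rewrite nth_ord_enum; apply: in_hull_point.
Qed.

End ConvexNice.

Local Close Scope R_scope.

Lemma sum_nat_of_bool (T : finType) (P Q : pred T) :
  \sum_(u | P u) (Q u : nat) = #|[set u | P u && Q u]|.
Proof.
rewrite -sum1_card [RHS](eq_bigl (fun u => P u && Q u)) ?big_mkcondr // => u.
by rewrite inE.
Qed.

Lemma card_ord_geq n t : #|[set u : 'I_n | t <= u]| = n - t.
Proof.
rewrite -sum1_card -[n - t]muln1 -sum_nat_const_nat big_geq_mkord.
by apply: eq_bigl => u; rewrite inE.
Qed.

Section PrefixAvoiding.
Variables (N k : nat) (c : 'I_N -> 'I_k) (i : 'I_k).

Definition prefix_avoiding (t : nat) : {set {perm 'I_N}} :=
  [set s : {perm 'I_N} | [forall j : 'I_N, (j < t) ==> (c (s j) != i)]].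

Lemma card_prefix_avoiding_fiber t s : s \in prefix_avoiding t ->
  #|[set u : 'I_N | (t <= u) && (c (s u) != i)]| = N - t - cluster_size c i.
Proof.
rewrite inE => /forallP s_avoid.
have -> : [set u : 'I_N | (t <= u) && (c (s u) != i)] =
          [set u : 'I_N | t <= u] :\: s @^-1: [set j | c j == i].
  by apply/setP => u; rewrite !inE andbC.
have sub : s @^-1: [set j | c j == i] \subset [set u : 'I_N | t <= u].
  apply/subsetP => u; rewrite !inE leqNgt; apply: contraL => u_lt.
  by have := s_avoid u; rewrite u_lt.
by rewrite cardsD (setIidPr sub) (card_preimset _ (@perm_inj _ s)) card_ord_geq.
Qed.

Lemma card_prefix_avoiding_swap t (t_lt : t < N) (u : 'I_N) : t <= u ->
  #|[set s in prefix_avoiding t | c (s u) != i]| = #|prefix_avoiding t.+1|.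
Proof.
move=> t_le_u; pose T := Ordinal t_lt.
have tperm_id (j : 'I_N) : j < t -> tperm T u j = j.
  move=> j_lt; apply: tpermD; apply/eqP => /(congr1 val) /= eq_j.
  - by move: j_lt; rewrite -eq_j ltnn.
  - by move: j_lt; rewrite -eq_j ltnNge t_le_u.
rewrite -[RHS](card_preimset _ (mulgI (tperm T u))); apply: eq_card => s.
rewrite !inE; apply/andP/forallP => [[/forallP s_avoid su_i] j | ts_avoid].
- apply/implyP; rewrite permM ltnS leq_eqVlt => /orP [/eqP j_t | j_lt].
    by rewrite (_ : j = T) ?tpermL //; apply: val_inj.
  by rewrite tperm_id //; apply: (implyP (s_avoid j)).
- split; last by have := ts_avoid T; rewrite /= ltnSn permM tpermL.
  apply/forallP => j; apply/implyP => j_lt.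
  by have := ts_avoid j; rewrite ltnS (ltnW j_lt) permM tperm_id.
Qed.

(* Double count the pairs (s, u) with s avoiding C_i on [0, t), t <= u and
   s u outside C_i: for fixed u, composing with the transposition (t u) maps
   them bijectively onto the permutations avoiding C_i on [0, t]. *)
Lemma card_prefix_avoidingS t : t < N ->
  (N - t) * #|prefix_avoiding t.+1| = (N - t - cluster_size c i) * #|prefix_avoiding t|.
Proof.
move=> t_lt.
pose pairs := \sum_(s in prefix_avoiding t) \sum_(u : 'I_N | t <= u) (c (s u) != i : nat).
have pairs_by_perm : pairs = (N - t - cluster_size c i) * #|prefix_avoiding t|.
  rewrite mulnC -sum_nat_const; apply: eq_bigr => s s_in.
  by rewrite sum_nat_of_bool card_prefix_avoiding_fiber.
have pairs_by_pos : pairs = (N - t) * #|prefix_avoiding t.+1|.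
  rewrite /pairs exchange_big /= -card_ord_geq -sum_nat_const /=.
  apply: eq_big => [u | u t_le_u]; first by rewrite inE.
  by rewrite sum_nat_of_bool card_prefix_avoiding_swap.
by rewrite -pairs_by_pos pairs_by_perm.
Qed.

Lemma card_prefix_avoiding_leS t : t < N ->
  #|prefix_avoiding t.+1| * N <= (N - cluster_size c i) * #|prefix_avoiding t|.
Proof.
move=> t_lt; set m := cluster_size c i.
have key : (N - t - m) * N <= (N - t) * (N - m) by nia.
have Nt_gt0 : 0 < N - t by rewrite subn_gt0.
rewrite -(leq_pmul2l Nt_gt0) mulnA card_prefix_avoidingS //.
by rewrite mulnAC mulnA leq_mul2r key orbT.
Qed.

(* Here [^] on nat is Stdlib's [Nat.pow], as Reals is imported last. *)
Lemma card_prefix_avoiding_le t : t <= N ->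
  #|prefix_avoiding t| * N ^ t <= (N - cluster_size c i) ^ t * #|{perm 'I_N}|.
Proof.
elim: t => [_ | t IH t_lt]; first by rewrite muln1 mul1n max_card.
rewrite !Nat.pow_succ_r'; apply: leq_trans
  (_ : (N - cluster_size c i) * #|prefix_avoiding t| * N ^ t <= _).
  by rewrite mulnA leq_mul2r card_prefix_avoiding_leS ?orbT.
by rewrite -!mulnA leq_mul2l IH ?orbT // ltnW.
Qed.

End PrefixAvoiding.

Lemma card_bigcup_le (I T : finType) (F : I -> {set T}) :
  #|\bigcup_i F i| <= \sum_i #|F i|.
Proof.
elim/big_ind2: _ => [| m U n V U_le V_le | i _] //; first by rewrite cards0.
by apply: leq_trans (leq_card_setU U V) _; apply: leq_add.
Qed.

Lemma card_not_good_order_le p N k l (x : 'I_N -> pt p) (c : 'I_N -> 'I_k) :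
  convex_nice x c -> l <= N ->
  #|~: [set s : {perm 'I_N} | good_order l x c s]| <= \sum_i #|prefix_avoiding c i l|.
Proof.
move=> nice l_le_N; apply: leq_trans (card_bigcup_le _); apply: subset_leq_card.
apply/subsetP => s; rewrite !inE; apply: contraR => /bigcupP not_avoid.
apply: good_order_of_prefix_hits => // i.
have : s \notin prefix_avoiding c i l by apply/negP => s_in; apply: not_avoid; exists i.
rewrite inE negb_forall => /existsP [j]; rewrite negb_imply negbK => /andP [j_lt /eqP <-].
by exists j.
Qed.

Local Open Scope R_scope.

Lemma sum_INR_le k (a : 'I_k -> nat) (b : R) : (forall i, INR (a i) <= b) ->
  INR (\sum_(i < k) a i) <= INR k * b.
Proof.
move=> a_le; rewrite -[in INR k](card_ord k) -sum1_card.
elim/big_rec2: _ => [| i s t _ st_le]; first by rewrite /=; lra.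
by rewrite !plus_INR /=; have := a_le i; lra.
Qed.

Lemma pow_one_sub_le_exp (q beta : R) (n : nat) :
  q <= 1 -> beta <= q -> (1 - q) ^ n <= exp (- (beta * INR n)).
Proof.
move=> q_le1 beta_le_q.
have -> : exp (- (beta * INR n)) = exp (- beta) ^ n.
  rewrite -Rpower_pow; last exact: exp_pos.
  by rewrite /Rpower ln_exp; congr exp; ring.
by apply: pow_incr; have := exp_ineq1_le (- beta); lra.
Qed.

Lemma card_prefix_avoiding_exp N k (c : 'I_N -> 'I_k) i l (beta : R) :
  (0 < N)%nat -> (l <= N)%nat -> beta <= INR (cluster_size c i) / INR N ->
  INR #|prefix_avoiding c i l| <= INR #|{perm 'I_N}| * exp (- (beta * INR l)).
Proof.
move=> N_gt0 l_le_N beta_le; set m := cluster_size c i; set q := INR m / INR N.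
have N_pos : 0 < INR N by apply: lt_0_INR; apply/ltP.
have m_le_N : (m <= N)%nat by have := max_card [set j | c j == i]; rewrite card_ord.
have Nm_eq : INR (N - m) = INR N * (1 - q).
  by rewrite minus_INR; [rewrite /q; field; lra | apply/leP].
have q_le1 : q <= 1 by have := pos_INR (N - m); rewrite Nm_eq; nra.
have := le_INR _ _ (elimT leP (card_prefix_avoiding_le c i l_le_N)).
rewrite !mult_INR !pow_INR Nm_eq Rpow_mult_distr => bound.
have Nl_pos : 0 < INR N ^ l by apply: pow_lt.
apply: Rle_trans (_ : (1 - q) ^ l * INR #|{perm 'I_N}| <= _); last first.
  by rewrite Rmult_comm; apply: Rmult_le_compat_l; [exact: pos_INR | exact: pow_one_sub_le_exp].
apply: (Rmult_le_reg_r (INR N ^ l)) => //.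
by move: bound; rewrite Rmult_assoc Rmult_comm; lra.
Qed.

Local Close Scope R_scope.

Theorem mainTheorem10 (p N k l : nat) (x : 'I_N -> pt p) (c : 'I_N -> 'I_k)
  (beta : R)
  (Hinj : injective x)
  (Hsurj : forall i : 'I_k, exists j, c j = i)
  (Hnice : convex_nice x c)
  (Hbeta_le : forall i : 'I_k, (beta <= INR (cluster_size c i) / INR N)%R)
  (Hbeta_eq : exists i : 'I_k, beta = (INR (cluster_size c i) / INR N)%R)
  (Hkl : (k <= l)%N) (HlN : (l <= N)%N) :
  (1 - INR k * exp (- (beta * INR l))
     <= INR #|[set s : {perm 'I_N} | good_order l x c s]|
        / INR #|[set: {perm 'I_N}]|)%R.
Proof.
set good := [set s : {perm 'I_N} | good_order l x c s].
set D := #|[set: {perm 'I_N}]|; set e := exp (- (beta * INR l)).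
have D_pos : (0 < INR D)%R by apply/lt_0_INR/ltP/card_gt0P; exists 1%g; rewrite inE.
have D_eq : INR D = (INR #|good| + INR #|~: good|)%R by rewrite /D cardsT -(cardsC good) plus_INR.
have bad_le : (INR #|~: good| <= INR k * (INR D * e))%R.
  apply: Rle_trans (le_INR _ _ (elimT leP (card_not_good_order_le Hnice HlN))) _.
  apply: sum_INR_le => i; have [j _] := Hsurj i; rewrite /D cardsT.
  by apply: card_prefix_avoiding_exp => //; apply: leq_ltn_trans (ltn_ord j).
apply: (Rmult_le_reg_r (INR D)) => //.
rewrite /Rdiv Rmult_assoc Rinv_l ?Rmult_1_r; last lra.
have -> : ((1 - INR k * e) * INR D = INR D - INR k * (INR D * e))%R by ring.
lra.
Qed.
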